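(* Let $j \geq 2$ be an integer and let $(S^{2j}, g)$ be the standard $2j$-dimensional round sphere of constant sectional curvature $1$. Then even, $G_t$-invariant complex measures on the unit tangent bundle $S(S^{2j})$ are not determined by their projection to $S^{2j}$: there exist two distinct even, $G_t$-invariant complex measures on $S(S^{2j})$ with the same projection to $S^{2j}$. In particular, there exists a non-zero, even, $G_t$-invariant finite real (signed) measure $\mu$ on $S(S^{2j})$ whose projection to $S^{2j}$ is zero, i.e. $\mu(\pi^{-1}(A)) = 0$ for every Borel set $A \subseteq S^{2j}$. *)

From HB Require Import structures.
From mathcomp Require Import all_boot all_order all_algebra.
From mathcomp Require Import all_classical all_reals all_analysis.
Set Implicit Arguments. Unset Strict Implicit. Unset Printing Implicit Defensive.
Import Order.TTheory GRing.Theory Num.Theory.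
Local Open Scope classical_set_scope.
Local Open Scope ring_scope.

(* Ambient Euclidean space R^N modelled as N.-tuple R (product Borel sigma-algebra,
   which is the Borel sigma-algebra of R^N). Points of the tangent bundle
   T R^N = R^N x R^N are pairs (x, v). *)
Section defs.
Variable R : realType.
Variable N : nat.

Definition edot (x y : N.-tuple R) : R := \sum_(i < N) tnth x i * tnth y i.

Definition sphere : set (N.-tuple R) := [set x | edot x x = 1].

Definition unit_tangent_bundle : set (N.-tuple R * N.-tuple R) :=
  [set p | edot p.1 p.1 = 1 /\ edot p.2 p.2 = 1 /\ edot p.1 p.2 = 0].

Definition geodesic_flow (t : R) (p : N.-tuple R * N.-tuple R)
  : N.-tuple R * N.-tuple R :=
  ([tuple cos t * tnth p.1 i + sin t * tnth p.2 i | i < N],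
   [tuple - sin t * tnth p.1 i + cos t * tnth p.2 i | i < N]).

Definition flip_dir (p : N.-tuple R * N.-tuple R) : N.-tuple R * N.-tuple R :=
  (p.1, [tuple - tnth p.2 i | i < N]).

Definition footpoint (p : N.-tuple R * N.-tuple R) : N.-tuple R := p.1.

(* A finite signed (real) measure on S(S^(N-1)) is represented as a charge on the
   ambient Borel space R^N x R^N that vanishes on every Borel set disjoint from
   the (closed) set S(S^(N-1)). *)
Definition supported_on_UTB (mu : set (N.-tuple R * N.-tuple R) -> \bar R) : Prop :=
  forall A, measurable A -> A `&` unit_tangent_bundle = set0 -> mu A = 0%E.

Definition even_measure (mu : set (N.-tuple R * N.-tuple R) -> \bar R) : Prop :=
  forall A, measurable A -> mu (flip_dir @^-1` A) = mu A.

Definition flow_invariant (mu : set (N.-tuple R * N.-tuple R) -> \bar R) : Prop :=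
  forall (t : R) A, measurable A -> mu (geodesic_flow t @^-1` A) = mu A.

Definition projection (mu : set (N.-tuple R * N.-tuple R) -> \bar R)
  (A : set (N.-tuple R)) : \bar R := mu (footpoint @^-1` A).

Definition even_invariant_UTB_measure (mu : set (N.-tuple R * N.-tuple R) -> \bar R)
  : Prop := supported_on_UTB mu /\ even_measure mu /\ flow_invariant mu.

(* Complex measures are represented by their real and imaginary parts,
   a pair of finite signed measures (charges). *)
Definition cmeasure :=
  ({charge set (N.-tuple R * N.-tuple R) -> \bar R} *
   {charge set (N.-tuple R * N.-tuple R) -> \bar R})%type.

Definition even_invariant_UTB_cmeasure (m : cmeasure) : Prop :=
  even_invariant_UTB_measure m.1 /\ even_invariant_UTB_measure m.2.

Definition cmeasure_distinct (m1 m2 : cmeasure) : Prop :=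
  exists A, measurable A /\ (m1.1 A <> m2.1 A \/ m1.2 A <> m2.2 A).

Definition same_projection (m1 m2 : cmeasure) : Prop :=
  forall A : set (N.-tuple R), measurable A ->
    projection m1.1 A = projection m2.1 A /\ projection m1.2 A = projection m2.2 A.
End defs.

From HB Require Import structures.
From mathcomp Require Import all_boot all_order all_algebra.
From mathcomp Require Import all_classical all_reals all_analysis.
From mathcomp Require Import measurable_realfun ring lra.
Set Implicit Arguments. Unset Strict Implicit. Unset Printing Implicit Defensive.
Import Order.TTheory GRing.Theory Num.Theory.
Local Open Scope classical_set_scope.
Local Open Scope ring_scope.

(* Proof idea: for signs e1, e2 the map
     ((u1, u2), (w1, w2)) |-> (x, v),  x = (a u1, a u2, b w1, b w2, 0, ...),
     v = e1 (-a u2, a u1, e2 (-b w2), e2 b w1, 0, ...)      (a^2 + b^2 = 1)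
   embeds the torus S^1 x S^1 into the unit tangent bundle of S^(N-1) (N >= 4)
   and conjugates the geodesic flow G_t to the rotation by (e1 t, e1 e2 t).
   Pushing the uniform measure of the torus forward thus gives G_t-invariant
   measures nu(e1, e2); the flip (x, v) |-> (x, -v) exchanges e1 with -e1, so
   nu(+, e2) + nu(-, e2) is even, and the footpoint x does not see e1, e2 at all.
   Hence nu(+, +) + nu(-, +) - nu(+, -) - nu(-, -) is even, invariant and projects
   to zero, while it is non-zero because the sign of x2 v1 x4 v3 is e2. *)

Section pushforward_structures.
Context d1 d2 (T1 : measurableType d1) (T2 : measurableType d2) (R : realType).

(* The library's instances on [pushforward] take [mf] as an argument that
   canonical-structure inference cannot find, so we supply it by hand. *)
Definition pushforward_measure (m : {measure set T1 -> \bar R}) (f : T1 -> T2)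
  (mf : measurable_fun [set: T1] f) : {measure set T2 -> \bar R} :=
  ltac:(refine (pushforward m f); exact: mf).

Definition pushforward_charge (nu : {charge set T1 -> \bar R}) (f : T1 -> T2)
  (mf : measurable_fun [set: T1] f) : {charge set T2 -> \bar R} :=
  ltac:(refine (pushforward nu f); exact: mf).

Lemma measurable_preimage (f : T1 -> T2) A :
  measurable_fun [set: T1] f -> measurable A -> measurable (f @^-1` A).
Proof. by move=> mf mA; rewrite -[X in measurable X]setTI; exact: mf. Qed.

End pushforward_structures.

Section lebesgue_shift.
Variable R : realType.
Local Notation lambda := (@lebesgue_measure R).

Lemma measurable_fun_shift (t : R) :
  measurable_fun [set: measurableTypeR R]
    ((fun x => x + t) : measurableTypeR R -> measurableTypeR R).
Proof. by apply: measurable_funD => //; exact: measurable_cst. Qed.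

Lemma lebesgue_measure_shift (t : R) (A : set R) : measurable A ->
  lambda ((fun x => x + t) @^-1` A) = lambda A.
Proof.
move=> mA; apply/esym.
apply: (lebesgue_measure_unique
  (mu := pushforward_measure lambda (measurable_fun_shift t)) _ mA).
move=> _ [[a b] _ <-]; rewrite /= /pushforward.
have -> : (fun x => x + t) @^-1` `]a, b]%classic = `](a - t), (b - t)]%classic.
  by apply/seteqP; split => x /=; rewrite !in_itv/= ltrBlDr lerBrDr.
rewrite !lebesgue_measure_itv/= !lte_fin ltrD2r; congr (if _ then _ else _).
by congr (_%:E); ring.
Qed.

Variable tau : R.
Hypothesis tau_gt0 : 0 < tau.

Definition window (F : set R) : \bar R := lambda (F `&` `[0, tau[%classic).

Variable E : set R.
Hypotheses (mE : measurable E) (E_periodic : forall x, E (x + tau) = E x).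

Lemma periodic_natmul n x : E (x + n%:R * tau) = E x.
Proof.
elim: n => [|n IH]; first by rewrite mul0r addr0.
by rewrite -addn1 natrD mulrDl mul1r addrA E_periodic.
Qed.

Lemma periodic_intmul (k : int) x : E (x + k%:~R * tau) = E x.
Proof.
case: k => n; first exact: periodic_natmul.
rewrite -(periodic_natmul n.+1) -addrA -mulrDl NegzE mulrNz.
by rewrite addNr mul0r addr0.
Qed.

Lemma window_shift_lt (s : R) : 0 <= s < tau ->
  window ((fun x => x + s) @^-1` E) = window E.
Proof.
rewrite /window => /andP[s_ge0 s_lt].
pose Ehi := E `&` `[s, tau[%classic; pose Elo := E `&` `[0, s[%classic.
have mEhi : measurable Ehi by apply: measurableI => //; exact: measurable_itv.
have mElo : measurable Elo by apply: measurableI => //; exact: measurable_itv.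
(* the part of [s, s + tau[ beyond [tau] wraps around to [0, s[ *)
have -> : ((fun x => x + s) @^-1` E) `&` `[0, tau[%classic =
    ((fun x => x + s) @^-1` Ehi) `|` ((fun x => x + (s - tau)) @^-1` Elo).
  apply/seteqP; split => x; rewrite /Ehi /Elo /= !in_itv/=.
  - move=> [Ex /andP[x0 xt]]; have [xs|xs] := ltP (x + s) tau.
      by left; split => //; apply/andP; split; lra.
    right; rewrite addrA -E_periodic subrK; split => //.
    by apply/andP; split; lra.
  - move=> [[Ex /andP[? ?]]|[]]; first by split => //; apply/andP; split; lra.
    by rewrite addrA -E_periodic subrK => Ex /andP[? ?]; split => //; apply/andP; split; lra.
rewrite measureU; last 3 first.
- by apply: measurable_preimage mEhi; exact: measurable_fun_shift.
- by apply: measurable_preimage mElo; exact: measurable_fun_shift.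
- apply/seteqP; split => x //=; rewrite /Ehi /Elo /= !in_itv/=.
  by move=> [[_ /andP[? ?]] [_ /andP[? ?]]]; lra.
transitivity (lambda Ehi + lambda Elo)%E.
  by congr (_ + _)%E; exact: lebesgue_measure_shift.
rewrite -measureU //; last first.
  apply/seteqP; split => x //=; rewrite /Ehi /Elo /= !in_itv/=.
  by move=> [[_ /andP[? ?]] [_ /andP[? ?]]]; lra.
congr lambda; apply/seteqP; split => x; rewrite /Ehi /Elo /= !in_itv/=.
- by case=> -[Ex /andP[? ?]]; split => //; apply/andP; split; lra.
- move=> [Ex /andP[? ?]].
  by have [?|?] := ltP x s; [right|left]; split => //; apply/andP; split; lra.
Qed.

Lemma window_shift (s : R) : window ((fun x => x + s) @^-1` E) = window E.
Proof.
pose k := Num.floor (s / tau).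
have k_le : k%:~R * tau <= s by rewrite -ler_pdivlMr // floor_le.
have lt_k1 : s < (k + 1)%:~R * tau by rewrite -ltr_pdivrMr // floorD1_gt.
rewrite -(window_shift_lt (s := s - k%:~R * tau)); last first.
  by rewrite subr_ge0 k_le /=; move: lt_k1; rewrite intrD mulrDl mul1r; lra.
congr window; apply/seteqP; split => x /=;
  by rewrite -(periodic_intmul k (x + (s - _))) -addrA subrK.
Qed.

End lebesgue_shift.

Section circle_measure.
Variable R : realType.

Definition cis (a : measurableTypeR R) : R * R := (cos a, sin a).

Lemma measurable_cis : measurable_fun [set: measurableTypeR R] cis.
Proof.
apply: measurable_fun_pair.
- exact: continuous_measurable_fun (@continuous_cos R).
- exact: continuous_measurable_fun (@continuous_sin R).
Qed.

Lemma cisD2pi a : cis (a + pi *+ 2) = cis a.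
Proof. by rewrite /cis cosD2pi sinD2pi. Qed.

Definition lebesgue_period : {measure set (measurableTypeR R) -> \bar R} :=
  mrestr lebesgue_measure (measurable_itv `[0, pi *+ 2[).

Definition circle_measure : set (R * R) -> \bar R :=
  pushforward_measure lebesgue_period measurable_cis.
HB.instance Definition _ := Measure.on circle_measure.

Lemma circle_measureE F : circle_measure F = window (pi *+ 2) (cis @^-1` F).
Proof. by []. Qed.

Lemma circle_measure_setT : circle_measure [set: R * R] = (pi *+ 2)%:E.
Proof.
rewrite circle_measureE /window preimage_setT setTI lebesgue_measure_itv/=.
by rewrite lte_fin mulrn_wgt0 ?pi_gt0// -EFinD subr0.
Qed.

Lemma circle_measure_fin : fin_num_fun circle_measure.
Proof.
by apply: lty_fin_num_fun; change (circle_measure setT < +oo)%E; rewrite circle_measure_setT ltry.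
Qed.

HB.instance Definition _ :=
  Measure_isFinite.Build _ _ _ circle_measure circle_measure_fin.

Definition rot (s : R) (u : R * R) : R * R :=
  (cos s * u.1 - sin s * u.2, sin s * u.1 + cos s * u.2).

Lemma measurable_rot s : measurable_fun [set: R * R] (rot s).
Proof.
apply: measurable_fun_pair.
- by apply: measurable_funB; apply: measurable_funM => //; exact: measurable_cst.
- by apply: measurable_funD; apply: measurable_funM => //; exact: measurable_cst.
Qed.

Lemma rot_cis s a : rot s (cis a) = cis (a + s).
Proof. by rewrite /rot /cis /= cosD sinD; congr pair; ring. Qed.

Lemma circle_measure_rot s F : measurable F ->
  circle_measure (rot s @^-1` F) = circle_measure F.
Proof.
move=> mF; rewrite !circle_measureE.
have -> : cis @^-1` (rot s @^-1` F) = (fun a => a + s) @^-1` (cis @^-1` F).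
  by apply/seteqP; split => a /=; rewrite rot_cis.
have two_pi_gt0 : 0 < pi *+ 2 :> R by rewrite mulrn_wgt0 ?pi_gt0.
apply: (window_shift two_pi_gt0 (measurable_preimage measurable_cis mF)) => a.
by rewrite /= cisD2pi.
Qed.

Definition circle : set (R * R) := [set u | u.1 ^+ 2 + u.2 ^+ 2 = 1].

Lemma measurable_circle : measurable circle.
Proof.
have mf : measurable_fun [set: R * R] (fun u : R * R => u.1 ^+ 2 + u.2 ^+ 2).
  by apply: measurable_funD; apply: measurable_funX.
by rewrite -[circle]setTI; exact: mf measurableT [set 1] (measurable_set1 1).
Qed.

Lemma circle_measure_setC_circle : circle_measure (~` circle) = 0%E.
Proof.
rewrite circle_measureE /window (_ : cis @^-1` _ = set0) ?set0I ?measure0 //.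
by apply/seteqP; split => a //=; rewrite /circle /= cos2Dsin2.
Qed.

Definition upper_half : set (R * R) := [set u | 0 < u.2].

Lemma measurable_upper_half : measurable upper_half.
Proof.
rewrite (_ : upper_half = snd @^-1` `]0, +oo[%classic).
  exact: measurable_preimage measurable_snd (measurable_itv _).
by apply/seteqP; split => u; rewrite /= in_itv/= andbT.
Qed.

Lemma circle_measure_upper_half_gt0 : (0 < circle_measure upper_half)%E.
Proof.
have pi_gt0 := @pi_gt0 R.
apply: (@lt_le_trans _ _ (lebesgue_measure (`]0, pi[%classic : set R))).
  by rewrite lebesgue_measure_itv/= lte_fin pi_gt0 -EFinD subr0 lte_fin.
rewrite circle_measureE /window; apply: le_measure; rewrite ?inE.
- exact: measurable_itv.
- apply: measurableI; last exact: measurable_itv.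
  exact: measurable_preimage measurable_cis measurable_upper_half.
- move=> a /=; rewrite !in_itv/= => /andP[a_gt0 a_lt]; split.
    by apply: sin_gt0_pi; rewrite a_gt0 a_lt.
  by rewrite (ltW a_gt0) /=; lra.
Qed.

Definition torus_measure := (circle_measure \x circle_measure)%E.
HB.instance Definition _ := Measure.on torus_measure.

Lemma torus_measureX A B : measurable A -> measurable B ->
  torus_measure (A `*` B) = (circle_measure A * circle_measure B)%E.
Proof. by move=> mA mB; rewrite /torus_measure product_measure1E. Qed.

Lemma torus_measure_fin : fin_num_fun torus_measure.
Proof.
apply: lty_fin_num_fun; change (torus_measure setT < +oo)%E.
rewrite -setXTT torus_measureX // circle_measure_setT.
by rewrite -EFinM ltry.
Qed.

HB.instance Definition _ :=
  Measure_isFinite.Build _ _ _ torus_measure torus_measure_fin.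

Definition rot2 (s r : R) (p : (R * R) * (R * R)) := (rot s p.1, rot r p.2).

Lemma measurable_rot2 s r : measurable_fun [set: (R * R) * (R * R)] (rot2 s r).
Proof.
apply: measurable_fun_pair.
- exact: measurableT_comp (measurable_rot s) measurable_fst.
- exact: measurableT_comp (measurable_rot r) measurable_snd.
Qed.

Lemma torus_measure_rot2 s r X : measurable X ->
  torus_measure (rot2 s r @^-1` X) = torus_measure X.
Proof.
move=> mX; apply/esym; move: X mX; apply: (@product_measure_unique _ _ _ _ _ circle_measure
  circle_measure (pushforward_measure torus_measure (measurable_rot2 s r))).
move=> A B mA mB.
rewrite /= /pushforward (_ : _ @^-1` _ = rot s @^-1` A `*` rot r @^-1` B) //.
rewrite torus_measureX ?circle_measure_rot //.
- exact: measurable_preimage (measurable_rot s) mA.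
- exact: measurable_preimage (measurable_rot r) mB.
Qed.

Lemma torus_measure_off_torus X : measurable X ->
  X `<=` ~` (circle `*` circle) -> torus_measure X = 0%E.
Proof.
move=> mX sX; have mC := measurableC measurable_circle.
apply: (subset_measure0 mX (measurableU _ _ (measurableX mC measurableT)
                                         (measurableX measurableT mC))).
  move=> p /sX /= p_off; case: (pselect (circle p.1)) => [c1|]; last by left.
  by right; split=> // c2; apply: p_off.
apply/eqP; rewrite eq_le measure_ge0 andbT.
apply: le_trans (measureU2 _ (measurableX mC measurableT) (measurableX measurableT mC)) _.
change (torus_measure (~` circle `*` setT) + torus_measure (setT `*` ~` circle) <= 0)%E.
by rewrite !torus_measureX // circle_measure_setC_circle mul0e mule0 adde0.
Qed.

End circle_measure.

Section embed4.
Variables (R : realType) (N : nat).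

Definition embed4 (a b c d : R) : N.-tuple R := [tuple nth 0 [:: a; b; c; d] i | i < N].

Lemma embed4_lincomb (x y a b c d a' b' c' d' : R) :
  [tuple x * tnth (embed4 a b c d) i + y * tnth (embed4 a' b' c' d') i | i < N] =
  embed4 (x * a + y * a') (x * b + y * b') (x * c + y * c') (x * d + y * d').
Proof.
apply: eq_from_tnth => i; rewrite !tnth_mktuple.
by case: i => [[|[|[|[|i]]]] _] //=; rewrite ?nth_nil !mulr0 addr0.
Qed.

Lemma embed4_opp (a b c d : R) :
  [tuple - tnth (embed4 a b c d) i | i < N] = embed4 (- a) (- b) (- c) (- d).
Proof.
apply: eq_from_tnth => i; rewrite !tnth_mktuple.
by case: i => [[|[|[|[|i]]]] _] //=; rewrite ?nth_nil oppr0.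
Qed.

Lemma edot_embed4 (a b c d a' b' c' d' : R) : (4 <= N)%N ->
  edot (embed4 a b c d) (embed4 a' b' c' d') = a * a' + b * b' + c * c' + d * d'.
Proof.
move=> hN; pose F i := nth 0 [:: a; b; c; d] i * nth 0 [:: a'; b'; c'; d'] i.
rewrite /edot (eq_bigr (fun i : 'I_N => F i)); last by move=> i _; rewrite !tnth_mktuple.
rewrite -(big_mkord xpredT F) (@big_cat_nat _ _ _ 4) //=.
have -> : \sum_(4 <= i < N) F i = 0.
  by rewrite big_nat_cond big1 // => -[|[|[|[|i]]]] // _; rewrite /F !nth_default ?mul0r.
by rewrite addr0 !big_nat_recl // big_geq // addr0 !addrA.
Qed.

Lemma measurable_embed4 d (T : measurableType d) (fa fb fc fd : T -> R) :
  measurable_fun [set: T] fa -> measurable_fun [set: T] fb ->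
  measurable_fun [set: T] fc -> measurable_fun [set: T] fd ->
  measurable_fun [set: T] (fun p => embed4 (fa p) (fb p) (fc p) (fd p)).
Proof.
move=> ma mb mc md; apply/measurable_fun_tnthP => i.
rewrite (_ : _ \o _ = fun p => nth 0 [:: fa p; fb p; fc p; fd p] i); last first.
  by apply/funext => p; rewrite /= tnth_mktuple.
by case: i => [[|[|[|[|i]]]] _] //=; exact: measurable_cst.
Qed.

End embed4.

Section torus_lift.
Variables (R : realType) (N : nat).
Hypothesis hN : (4 <= N)%N.

Definition signb (b : bool) : R := if b then 1 else -1.

Lemma signb_negb b : signb (~~ b) = - signb b.
Proof. by case: b; rewrite /signb ?opprK. Qed.

(* Any [alpha], [beta] with [alpha ^+ 2 + beta ^+ 2 = 1] would do; rational
   values keep [lra] applicable. *)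
Local Notation alpha := (3 / 5 : R).
Local Notation beta := (4 / 5 : R).

Definition torus_lift (e1 e2 : bool) (p : (R * R) * (R * R)) : N.-tuple R * N.-tuple R :=
  (embed4 N (alpha * p.1.1) (alpha * p.1.2) (beta * p.2.1) (beta * p.2.2),
   embed4 N (signb e1 * (alpha * - p.1.2)) (signb e1 * (alpha * p.1.1))
     (signb e1 * signb e2 * (beta * - p.2.2)) (signb e1 * signb e2 * (beta * p.2.1))).

Lemma geodesic_flow_lift t e1 e2 p :
  geodesic_flow t (torus_lift e1 e2 p) =
  torus_lift e1 e2 (rot2 (signb e1 * t) (signb e1 * signb e2 * t) p).
Proof.
rewrite /geodesic_flow /= !embed4_lincomb /torus_lift /rot2 /rot /=.
by case: e1; case: e2; rewrite /signb !(mul1r, mulN1r, mulNr, opprK, cosN, sinN);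
  congr (embed4 _ _ _ _ _, embed4 _ _ _ _ _); ring.
Qed.

Lemma flip_dir_lift e1 e2 p : flip_dir (torus_lift e1 e2 p) = torus_lift (~~ e1) e2 p.
Proof.
rewrite /flip_dir /= embed4_opp /torus_lift signb_negb.
by congr (_, embed4 _ _ _ _ _); ring.
Qed.

Lemma torus_lift_UTB e1 e2 p : circle p.1 -> circle p.2 ->
  unit_tangent_bundle (torus_lift e1 e2 p).
Proof.
rewrite /circle /unit_tangent_bundle /torus_lift /= => u1 w1.
rewrite !edot_embed4 //; split; [|split]; case: e1; case: e2; rewrite /signb; lra.
Qed.

Lemma measurable_torus_lift e1 e2 : measurable_fun [set: (R * R) * (R * R)] (torus_lift e1 e2).
Proof.
have m11 : measurable_fun [set: (R * R) * (R * R)] (fun p => p.1.1).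
  exact: measurableT_comp measurable_fst measurable_fst.
have m12 : measurable_fun [set: (R * R) * (R * R)] (fun p => p.1.2).
  exact: measurableT_comp measurable_snd measurable_fst.
have m21 : measurable_fun [set: (R * R) * (R * R)] (fun p => p.2.1).
  exact: measurableT_comp measurable_fst measurable_snd.
have m22 : measurable_fun [set: (R * R) * (R * R)] (fun p => p.2.2).
  exact: measurableT_comp measurable_snd measurable_snd.
by apply: measurable_fun_pair; apply: measurable_embed4;
  do ?[apply: measurable_funM | apply: measurable_funN | exact: measurable_cst].
Qed.

End torus_lift.

Section invariant_charges.
Variables (R : realType) (N : nat).
Local Notation T := (N.-tuple R * N.-tuple R)%type.

Lemma even_invariant_UTB_measure_cadd (mu nu : {charge set T -> \bar R}) :
  even_invariant_UTB_measure mu -> even_invariant_UTB_measure nu ->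
  even_invariant_UTB_measure (cadd mu nu).
Proof.
move=> [mu_supp [mu_even mu_flow]] [nu_supp [nu_even nu_flow]].
split; [|split] => [A mA A0|A mA|t A mA]; rewrite /cadd /=.
- by rewrite mu_supp ?nu_supp ?adde0.
- by rewrite mu_even ?nu_even.
- by rewrite mu_flow ?nu_flow.
Qed.

Lemma even_invariant_UTB_measure_copp (mu : {charge set T -> \bar R}) :
  even_invariant_UTB_measure mu -> even_invariant_UTB_measure (copp mu).
Proof.
move=> [mu_supp [mu_even mu_flow]].
split; [|split] => [A mA A0|A mA|t A mA]; rewrite /copp /=.
- by rewrite mu_supp ?oppe0.
- by rewrite mu_even.
- by rewrite mu_flow.
Qed.

Lemma even_invariant_UTB_czero : even_invariant_UTB_measure (@czero _ T R).
Proof. by []. Qed.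

End invariant_charges.

Section lifted_charges.
Variables (R : realType) (N : nat).
Hypothesis hN : (4 <= N)%N.
Local Notation T := (N.-tuple R * N.-tuple R)%type.

Definition lifted_charge e1 e2 : {charge set T -> \bar R} :=
  pushforward_charge (charge_of_finite_measure (@torus_measure R))
    (measurable_torus_lift (N := N) e1 e2).

Lemma lifted_chargeE e1 e2 A :
  lifted_charge e1 e2 A = torus_measure (torus_lift N e1 e2 @^-1` A).
Proof. by []. Qed.

Lemma lifted_charge_flow e1 e2 t A : measurable A ->
  lifted_charge e1 e2 (geodesic_flow t @^-1` A) = lifted_charge e1 e2 A.
Proof.
move=> mA; rewrite !lifted_chargeE.
rewrite (_ : _ @^-1` _ = rot2 (signb R e1 * t) (signb R e1 * signb R e2 * t) @^-1`
                           (torus_lift N e1 e2 @^-1` A)).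
  by rewrite torus_measure_rot2 //; exact: measurable_preimage (measurable_torus_lift _ _) mA.
by apply/seteqP; split => p /=; rewrite geodesic_flow_lift.
Qed.

Lemma lifted_charge_flip e1 e2 A :
  lifted_charge e1 e2 (@flip_dir R N @^-1` A) = lifted_charge (~~ e1) e2 A.
Proof.
by rewrite !lifted_chargeE; congr torus_measure; apply/seteqP; split => p /=;
  rewrite flip_dir_lift.
Qed.

Lemma lifted_charge_supported e1 e2 : supported_on_UTB (lifted_charge e1 e2).
Proof.
move=> A mA A0; rewrite lifted_chargeE; apply: torus_measure_off_torus.
  exact: measurable_preimage (measurable_torus_lift _ _) mA.
move=> p /= Ap [c1 c2]; suff : (A `&` @unit_tangent_bundle R N) (torus_lift N e1 e2 p).
  by rewrite A0.
by split => //; exact: torus_lift_UTB.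
Qed.

Definition even_lifted_charge e2 : {charge set T -> \bar R} :=
  cadd (lifted_charge true e2) (lifted_charge false e2).

Lemma even_lifted_chargeE e2 A :
  even_lifted_charge e2 A = (lifted_charge true e2 A + lifted_charge false e2 A)%E.
Proof. by []. Qed.

Lemma even_lifted_charge_footpoint e2 B :
  even_lifted_charge e2 (@footpoint R N @^-1` B) =
  even_lifted_charge true (@footpoint R N @^-1` B).
Proof. by []. Qed.

Lemma even_lifted_charge_invariant e2 : even_invariant_UTB_measure (even_lifted_charge e2).
Proof.
split; [|split] => [A mA A0|A mA|t A mA]; rewrite !even_lifted_chargeE.
- by rewrite !lifted_charge_supported ?adde0.
- by rewrite !lifted_charge_flip addeC.
- by rewrite !lifted_charge_flow.
Qed.

Definition twisted_charge : {charge set T -> \bar R} :=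
  cadd (even_lifted_charge true) (copp (even_lifted_charge false)).

Lemma twisted_chargeE A :
  twisted_charge A = (even_lifted_charge true A - even_lifted_charge false A)%E.
Proof. by []. Qed.

Lemma twisted_charge_invariant : even_invariant_UTB_measure twisted_charge.
Proof.
apply: even_invariant_UTB_measure_cadd; first exact: even_lifted_charge_invariant.
by apply: even_invariant_UTB_measure_copp; exact: even_lifted_charge_invariant.
Qed.

Lemma projection_twisted_charge B : measurable B -> projection twisted_charge B = 0%E.
Proof.
move=> mB; rewrite /projection twisted_chargeE.
rewrite [X in (_ - X)%E]even_lifted_charge_footpoint subee //.
by rewrite fin_num_measure //; exact: measurable_preimage measurable_fst mB.
Qed.

Let o0 : 'I_N := Ordinal (leq_trans (isT : (1 <= 4)%N) hN).
Let o1 : 'I_N := Ordinal (leq_trans (isT : (2 <= 4)%N) hN).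
Let o2 : 'I_N := Ordinal (leq_trans (isT : (3 <= 4)%N) hN).
Let o3 : 'I_N := Ordinal hN.

Definition twist (q : T) : R := tnth q.1 o1 * tnth q.2 o0 * (tnth q.1 o3 * tnth q.2 o2).

Lemma twist_lift e1 e2 p :
  twist (torus_lift N e1 e2 p) = signb R e2 * (3 / 5 * (4 / 5) * p.1.2 * p.2.2) ^+ 2.
Proof. by rewrite /twist /= !tnth_mktuple /= /signb; case: e1; case: e2; ring. Qed.

Definition twist_pos : set T := [set q | 0 < twist q].

Lemma measurable_twist_pos : measurable twist_pos.
Proof.
have mcoord (i : 'I_N) (c : T -> N.-tuple R) : measurable_fun setT c ->
    measurable_fun [set: T] (fun q => tnth (c q) i).
  by move=> mc; exact: measurableT_comp (measurable_tnth i) mc.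
have mtwist : measurable_fun [set: T] twist.
  by rewrite /twist; do 2 apply: measurable_funM; apply: mcoord;
    first [exact: measurable_fst | exact: measurable_snd].
rewrite (_ : twist_pos = twist @^-1` `]0, +oo[%classic).
  exact: measurable_preimage mtwist (measurable_itv _).
by apply/seteqP; split => q; rewrite /= in_itv/= andbT.
Qed.

Lemma lifted_charge_twist_untwisted e1 : lifted_charge e1 false twist_pos = 0%E.
Proof.
rewrite lifted_chargeE (_ : _ @^-1` _ = set0) ?measure0 //.
apply/seteqP; split => p //; rewrite /twist_pos /= twist_lift /signb mulN1r oppr_gt0.
by rewrite ltNge sqr_ge0.
Qed.

Lemma lifted_charge_twist_twisted e1 : (0 < lifted_charge e1 true twist_pos)%E.
Proof.
have mU := @measurable_upper_half R.
apply: (@lt_le_trans _ _ (torus_measure (@upper_half R `*` @upper_half R))).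
  by rewrite torus_measureX // mule_gt0 // circle_measure_upper_half_gt0.
rewrite lifted_chargeE; apply: le_measure; rewrite ?inE.
- exact: measurableX.
- exact: measurable_preimage (measurable_torus_lift _ _) measurable_twist_pos.
- move=> p [/= u_pos w_pos]; rewrite /twist_pos /= twist_lift /signb mul1r.
  by rewrite exprn_gt0 // !mulr_gt0.
Qed.

Lemma twisted_charge_twist_pos_gt0 : (0 < twisted_charge twist_pos)%E.
Proof.
rewrite twisted_chargeE !even_lifted_chargeE.
rewrite [X in (_ - (X + _))%E]lifted_charge_twist_untwisted.
rewrite [X in (_ - (_ + X))%E]lifted_charge_twist_untwisted.
by rewrite adde0 sube0 adde_gt0 // lifted_charge_twist_twisted.
Qed.

End lifted_charges.

Lemma four_le_double_succ j : (2 <= j)%N -> (4 <= (2 * j).+1)%N.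
Proof. by move=> hj; rewrite ltnS (leq_trans _ (leq_mul (leqnn 2) hj)). Qed.

Theorem theorem3 (R : realType) (j : nat) (hj : (2 <= j)%N) :
  (exists m1 m2 : cmeasure R (2 * j)%N.+1,
      even_invariant_UTB_cmeasure m1 /\ even_invariant_UTB_cmeasure m2 /\
      cmeasure_distinct m1 m2 /\ same_projection m1 m2)
  /\
  (exists mu : {charge set (((2 * j)%N.+1).-tuple R * ((2 * j)%N.+1).-tuple R)%type -> \bar R},
      even_invariant_UTB_measure mu /\
      (exists A, measurable A /\ mu A <> 0%E) /\
      (forall A : set (((2 * j)%N.+1).-tuple R), measurable A -> projection mu A = 0%E)).
Proof.
have hN := four_le_double_succ hj.
pose mu := twisted_charge R (2 * j).+1.
have mu_inv : even_invariant_UTB_measure mu := twisted_charge_invariant R hN.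
have mu_proj A : measurable A -> projection mu A = 0%E := @projection_twisted_charge R _ A.
have mu_nz : exists A, measurable A /\ mu A <> 0%E.
  exists (twist_pos hN); split; first exact: measurable_twist_pos.
  by move=> mu0; have := twisted_charge_twist_pos_gt0 R hN; rewrite -/mu mu0 ltxx.
split; last by exists mu.
pose zero : {charge set (((2 * j).+1).-tuple R * ((2 * j).+1).-tuple R)%type -> \bar R} :=
  czero.
have zero_inv : even_invariant_UTB_measure zero := even_invariant_UTB_czero R (2 * j).+1.
exists (mu, zero), (zero, zero); split; [by []|split; [by []|split]].
  by have [A [mA muA]] := mu_nz; exists A; split; last by left.
by move=> B mB; split; [exact: mu_proj|].
Qed.
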